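(* There exist a probabilistic decision problem $(X,S,\Pr)$ and an \texttt{adp} game $\mathcal{G}$ for it (with suitable strategy sets $\Sigma^p$ of deterministic prover functions $\delta^p:X\to M^p$ and $\Sigma^v$ of convex combinations of deterministic verifier functions $\delta^v:X\times M^p\to\{0,1\}$) such that: there exists a prover strategy $\delta^p\in\Sigma^p$ and verifier strategy $\sigma^v_\star\in\Sigma^v$ for which $\langle\delta^p,\sigma^v_\star\rangle$ is a valid interactive proof system for $S$ with completeness error $\epsilon_c=0$; and yet the property ''$\langle\delta^p,\sigma^v\rangle$ is a verifier-leading Stackelberg equilibrium of $\mathcal{G}$'' is neither necessary nor sufficient for $\langle\delta^p,\sigma^v\rangle$ to be a valid interactive proof system. That is, there is a valid system in $\Sigma^p\times\Sigma^v$ that is not a verifier-leading Stackelberg equilibrium, and there is a verifier-leading Stackelberg equilibrium that is not a valid system.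
   Context: A probabilistic decision problem is a triple $(X,S,\Pr)$ where $X$ is a set of instances, $S\subseteq X$ and $\Pr$ is a distribution on $X$; the label of $x$ is $y=\mathbf{1}_S(x)\in\{0,1\}$. The \texttt{adp} game: there is one prover $p$ and one verifier $v$, and play is as follows. On input $x\sim\Pr$, the prover sends a single message $m^p=\delta^p(x)\in M^p$, where its strategy is a deterministic function $\delta^p:X\to M^p$. The verifier then outputs a decision in $\{0,1\}$ according to a strategy $\sigma^v$, which is a convex combination (mixture) of deterministic functions $\delta^v:X\times M^p\to\{0,1\}$. We write $\sigma^v(b\mid x,m^p)$ for the probability that the verifier outputs $b$. The losses are $\mathcal{L}^p=-\mathbb{E}_{x\sim\Pr}[\log\sigma^v(1\mid x,\delta^p(x))]$ and $\mathcal{L}^v=-\mathbb{E}_{x\sim\Pr}[\log\sigma^v(y\mid x,\delta^p(x))]$. A verifier-leading Stackelberg equilibrium is a profile $(\delta^p,\sigma^v)$ such that: - $\delta^p$ minimises $\mathcal{L}^p(\cdot,\sigma^v)$ over $\Sigma^p$, and - $\sigma^v$ minimises, over $\Sigma^v$, the worst-case (maximum) verifier loss over the prover's best responses. Validity. A prover–verifier pair $\langle p,v\rangle$ is $(\epsilon_c,\epsilon_s)$-valid for $S$, where $\epsilon_c+\epsilon_s<1$, if both of the following hold. - Completeness: for every $x\in S$, $v$ outputs $1$ when interacting with $p$ with probability at least $1-\epsilon_c$. - Soundness: for every $x\notin S$ and every prover $p'$ in the strategy set, $v$ outputs $0$ when interacting with $p'$ with probability at least $1-\epsilon_s$. The pair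 is ''valid'' if it is $(\epsilon_c,\epsilon_s)$-valid for some such $\epsilon_c,\epsilon_s$. *)

From HB Require Import structures.
From mathcomp Require Import all_boot all_order all_algebra.
From mathcomp Require Import all_classical all_reals all_analysis.
Set Implicit Arguments. Unset Strict Implicit. Unset Printing Implicit Defensive.
Import Order.TTheory GRing.Theory Num.Theory.
Local Open Scope ring_scope.

Section ADP.
Variables (R : realType) (X M : finType).

Definition is_dist (T : finType) (f : {ffun T -> R}) : Prop :=
  (forall t, 0 <= f t) /\ \sum_(t : T) f t = 1.

Definition det_verifier := {ffun (X * M)%type -> bool}.

(* Verifier strategy: a convex combination (mixture) of deterministic
   verifier functions, i.e. a distribution over det_verifier. *)
Definition vstrat := {ffun det_verifier -> R}.

Definition vprob (sv : vstrat) (b : bool) (x : X) (m : M) : R :=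
  \sum_(d : det_verifier) sv d * (d (x, m) == b)%:R.

Definition nlog (p : R) : \bar R :=
  if p <= 0 then +oo%E else (- ln p)%:E.

(* E_{x ~ Pr}[-log g(x)]; points of probability 0 do not contribute. *)
Definition expect_nlog (Pr : {ffun X -> R}) (g : X -> R) : \bar R :=
  \sum_(x : X | (0 < Pr x)%R) ((Pr x)%:E * nlog (g x))%E.

Definition loss_p (Pr : {ffun X -> R}) (dp : {ffun X -> M}) (sv : vstrat)
  : \bar R := expect_nlog Pr (fun x => vprob sv true x (dp x)).

Definition loss_v (S : {set X}) (Pr : {ffun X -> R}) (dp : {ffun X -> M})
  (sv : vstrat) : \bar R := expect_nlog Pr (fun x => vprob sv (x \in S) x (dp x)).

Definition adp_game (Pr : {ffun X -> R}) (Sp : {set {ffun X -> M}})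
  (Sv : vstrat -> Prop) : Prop :=
  is_dist Pr /\ (forall sv, Sv sv -> is_dist sv).

Definition best_responseb (Pr : {ffun X -> R}) (Sp : {set {ffun X -> M}})
  (sv : vstrat) (dp : {ffun X -> M}) : bool :=
  (dp \in Sp) && [forall dp' in Sp, (loss_p Pr dp sv <= loss_p Pr dp' sv)%E].

Definition worst_loss_v (S : {set X}) (Pr : {ffun X -> R})
  (Sp : {set {ffun X -> M}}) (sv : vstrat) : \bar R :=
  \big[Order.max/-oo%E]_(dp | best_responseb Pr Sp sv dp) loss_v S Pr dp sv.

Definition vl_stackelberg (S : {set X}) (Pr : {ffun X -> R})
  (Sp : {set {ffun X -> M}}) (Sv : vstrat -> Prop)
  (dp : {ffun X -> M}) (sv : vstrat) : Prop :=
  Sv sv /\ best_responseb Pr Sp sv dp /\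
  (forall sv', Sv sv' -> (worst_loss_v S Pr Sp sv <= worst_loss_v S Pr Sp sv')%E).

Definition valid_eps (S : {set X}) (Sp : {set {ffun X -> M}})
  (dp : {ffun X -> M}) (sv : vstrat) (ec es : R) : Prop :=
  [/\ 0 <= ec, 0 <= es, ec + es < 1,
      (forall x, x \in S -> 1 - ec <= vprob sv true x (dp x)) &
      (forall x, x \notin S -> forall dp', dp' \in Sp ->
          1 - es <= vprob sv false x (dp' x))].

Definition valid (S : {set X}) (Sp : {set {ffun X -> M}})
  (dp : {ffun X -> M}) (sv : vstrat) : Prop :=
  exists ec es, valid_eps S Sp dp sv ec es.

End ADP.

From HB Require Import structures.
From mathcomp Require Import all_boot all_order all_algebra.
From mathcomp Require Import all_classical all_reals all_analysis.
Set Implicit Arguments. Unset Strict Implicit. Unset Printing Implicit Defensive.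
Import Order.TTheory GRing.Theory Num.Theory.
Local Open Scope ring_scope.

(* Take instances x_yes in S and x_no outside S, each of probability 1/2, a
   third instance outside S of probability 0, one-bit messages, and pure
   verifiers that all reject x_no.  Then the prover's loss is +oo whatever it
   plays, so every prover is a best response and a verifier is judged by its
   worst prover.  The verifier accepting x_yes only on message 1 is valid
   with the honest prover, but the prover sending 0 costs it loss +oo, while
   accepting exactly S achieves 0: it is not an equilibrium.  The verifier
   rejecting only x_no is correct on the support of Pr, hence achieves the
   optimal loss 0, yet it accepts the probability-0 instance outside S. *)

Section PureVerifier.
Variables (R : realType) (X M : finType).
Implicit Types (d : det_verifier X M) (S : {set X}) (Sp : {set {ffun X -> M}})
  (dp : {ffun X -> M}).

Definition pure_vstrat d : vstrat R X M := [ffun d' => (d' == d)%:R].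

Lemma pure_vstrat_dist d : is_dist (pure_vstrat d).
Proof.
split=> [d'|]; first by rewrite ffunE ler0n.
rewrite (bigD1 d) //= ffunE eqxx big1 ?addr0 // => d' /negbTE d'd.
by rewrite ffunE d'd.
Qed.

Lemma vprob_pure d b x m : vprob (pure_vstrat d) b x m = (d (x, m) == b)%:R.
Proof.
rewrite /vprob (bigD1 d) //= ffunE eqxx mul1r big1 ?addr0 // => d' /negbTE d'd.
by rewrite ffunE d'd mul0r.
Qed.

Lemma pure_valid_eps00 S Sp dp d :
  (forall x, x \in S -> d (x, dp x)) ->
  (forall x, x \notin S -> forall dp', dp' \in Sp -> ~~ d (x, dp' x)) ->
  valid_eps S Sp dp (pure_vstrat d) 0 0.
Proof.
move=> complete sound; split=> // [x xS | x xNS dp' dp'Sp].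
  by rewrite vprob_pure complete // subr0.
by rewrite vprob_pure (negbTE (sound x xNS dp' dp'Sp)) subr0 lexx.
Qed.

Lemma pure_not_valid S Sp dp d x (dp' : {ffun X -> M}) :
  x \notin S -> dp' \in Sp -> d (x, dp' x) -> ~ valid S Sp dp (pure_vstrat d).
Proof.
move=> xNS dp'Sp accept [ec [es [ec0 es0 small _ sound]]].
have := sound x xNS dp' dp'Sp; rewrite vprob_pure accept /= subr_le0 => es1.
have : 1 <= ec + es by rewrite (le_trans es1) // lerDr.
by rewrite leNgt small.
Qed.

End PureVerifier.

Lemma nlog_nat (R : realType) (b : bool) :
  nlog (b%:R : R) = if b then 0%E else +oo%E.
Proof. by case: b; rewrite /nlog /= ?lexx // ler10 ln1 oppr0. Qed.

Section Example.
Variable R : realType.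

Local Notation X := (option bool).
Local Notation M := bool.
Local Notation pure := (@pure_vstrat R X M).

Definition x_yes : X := Some true.
Definition x_no : X := Some false.

Definition Pr_ex : {ffun X -> R} := [ffun x => if x is Some _ then 2^-1 else 0].
Definition S_ex : {set X} := [set x_yes].
Definition Sp_ex : {set {ffun X -> M}} := [set: {ffun X -> M}].

Definition v_exact : det_verifier X M := [ffun xm => xm.1 == x_yes].
Definition v_signed : det_verifier X M := [ffun xm => (xm.1 == x_yes) && xm.2].
Definition v_lax : det_verifier X M := [ffun xm => xm.1 != x_no].

Definition Sv_ex (sv : vstrat R X M) : Prop :=
  sv = pure v_exact \/ sv = pure v_signed \/ sv = pure v_lax.

Definition rejects_no (v : det_verifier X M) : Prop := forall m, v (x_no, m) = false.

Lemma rejects_no_Sv_ex sv : Sv_ex sv -> exists2 v, sv = pure v & rejects_no v.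
Proof. by case=> [|[|]] ->; eexists => // m; rewrite ffunE. Qed.

Lemma adp_game_ex : adp_game Pr_ex Sp_ex Sv_ex.
Proof.
split; last by move=> sv /rejects_no_Sv_ex [v -> _]; apply: pure_vstrat_dist.
split=> [[x|]|]; rewrite ?ffunE ?invr_ge0 ?ler0n //.
rewrite (bigD1 x_yes) // (bigD1 x_no) // big1 => [|[[]|] //]; last by rewrite ffunE.
by rewrite /= !ffunE addr0 -[2^-1]mul1r -splitr.
Qed.

Lemma expect_nlog_ex (g : X -> R) :
  expect_nlog Pr_ex g = ((2^-1)%:E * nlog (g x_yes) + (2^-1)%:E * nlog (g x_no))%E.
Proof.
have half_gt0 : (0 : R) < 2^-1 by rewrite invr_gt0.
rewrite /expect_nlog (bigD1 x_yes) /=; last by rewrite ffunE.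
rewrite (bigD1 x_no) /=; last by rewrite ffunE half_gt0.
rewrite big1 ?adde0 ?ffunE // => -[[]|]; rewrite ?andbF //.
by rewrite ffunE ltxx.
Qed.

Lemma mule_half_nlog_nat (b : bool) :
  ((2^-1 : R)%:E * nlog (b%:R : R))%E = if b then 0%E else +oo%E.
Proof.
by rewrite nlog_nat; case: b; rewrite ?mule0 // mulry gtr0_sg ?invr_gt0 // mul1e.
Qed.

Lemma loss_v_pure v dp : loss_v S_ex Pr_ex dp (pure v) =
  ((if v (x_yes, dp x_yes) then 0 else +oo)
   + (if v (x_no, dp x_no) then +oo else 0))%E.
Proof.
rewrite /loss_v expect_nlog_ex !vprob_pure !inE /= !mule_half_nlog_nat.
by case: (v (x_yes, _)); case: (v (x_no, _)).
Qed.

Lemma loss_v_pure_ge0 v dp : (0 <= loss_v S_ex Pr_ex dp (pure v))%E.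
Proof. by rewrite loss_v_pure; do 2 case: ifP => _; rewrite ?adde0 ?leey. Qed.

Lemma loss_p_rejects_no v dp : rejects_no v -> loss_p Pr_ex dp (pure v) = +oo%E.
Proof.
move=> rej; rewrite /loss_p expect_nlog_ex !vprob_pure rej !mule_half_nlog_nat.
by case: (_ == _); rewrite ?addey.
Qed.

Lemma best_response_rejects_no v dp :
  rejects_no v -> best_responseb Pr_ex Sp_ex (pure v) dp.
Proof.
move=> rej; rewrite /best_responseb inE; apply/forall_inP => dp' _.
by rewrite !loss_p_rejects_no.
Qed.

Lemma worst_loss_v_ge v dp : rejects_no v ->
  (loss_v S_ex Pr_ex dp (pure v) <= worst_loss_v S_ex Pr_ex Sp_ex (pure v))%E.
Proof. by move=> rej; apply: le_bigmax_cond; apply: best_response_rejects_no. Qed.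

Lemma worst_loss_v_Sv_ex_ge0 sv : Sv_ex sv -> (0 <= worst_loss_v S_ex Pr_ex Sp_ex sv)%E.
Proof.
move=> /rejects_no_Sv_ex [v -> rej].
exact: le_trans (loss_v_pure_ge0 v [ffun=> true]) (worst_loss_v_ge [ffun=> true] rej).
Qed.

Lemma worst_loss_v_le0 v : rejects_no v -> (forall m, v (x_yes, m)) ->
  (worst_loss_v S_ex Pr_ex Sp_ex (pure v) <= 0)%E.
Proof.
move=> rej acc; apply: bigmax_le => // dp _.
by rewrite loss_v_pure rej acc adde0.
Qed.

Lemma valid_eps_exact dp : valid_eps S_ex Sp_ex dp (pure v_exact) 0 0.
Proof. by apply: pure_valid_eps00 => [x | x + dp' _]; rewrite inE /v_exact ffunE. Qed.

Lemma valid_eps_signed : valid_eps S_ex Sp_ex [ffun=> true] (pure v_signed) 0 0.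
Proof.
apply: pure_valid_eps00 => [x | x + dp' _]; rewrite inE /v_signed !ffunE /= ?andbT //.
by move=> /negbTE ->.
Qed.

Lemma not_vl_stackelberg_signed dp :
  ~ vl_stackelberg S_ex Pr_ex Sp_ex Sv_ex dp (pure v_signed).
Proof.
case=> _ [_ /(_ (pure v_exact) (or_introl erefl)) opt].
have rej_signed : rejects_no v_signed by move=> m; rewrite ffunE.
have worst_signed : (+oo <= worst_loss_v S_ex Pr_ex Sp_ex (pure v_signed))%E.
  have := worst_loss_v_ge [ffun=> false] rej_signed.
  by rewrite loss_v_pure !ffunE /= adde0.
have worst_exact : (worst_loss_v S_ex Pr_ex Sp_ex (pure v_exact) <= 0)%E.
  by apply: worst_loss_v_le0 => m; rewrite ffunE.
by have := le_trans (le_trans worst_signed opt) worst_exact; rewrite leye_eq.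
Qed.

Lemma vl_stackelberg_lax : vl_stackelberg S_ex Pr_ex Sp_ex Sv_ex [ffun=> true] (pure v_lax).
Proof.
have rej_lax : rejects_no v_lax by move=> m; rewrite ffunE.
split; first by right; right.
split; first exact: best_response_rejects_no.
move=> sv' /worst_loss_v_Sv_ex_ge0; apply: le_trans.
by apply: worst_loss_v_le0 => // m; rewrite ffunE.
Qed.

Lemma not_valid_lax dp : ~ valid S_ex Sp_ex dp (pure v_lax).
Proof. by apply: (pure_not_valid (x := None) (dp' := [ffun=> true])); rewrite ?inE ?ffunE. Qed.

End Example.

Theorem proposition1 (R : realType) :
  exists (X M : finType) (S : {set X}) (Pr : {ffun X -> R})
         (Sp : {set {ffun X -> M}}) (Sv : vstrat R X M -> Prop),
    adp_game Pr Sp Sv /\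
    (exists dp sv es, dp \in Sp /\ Sv sv /\ valid_eps S Sp dp sv 0 es) /\
    (exists dp sv, dp \in Sp /\ Sv sv /\ valid S Sp dp sv /\
                   ~ vl_stackelberg S Pr Sp Sv dp sv) /\
    (exists dp sv, vl_stackelberg S Pr Sp Sv dp sv /\ ~ valid S Sp dp sv).
Proof.
exists (option bool), bool, S_ex, (Pr_ex R), Sp_ex, (@Sv_ex R).
split; first exact: adp_game_ex.
split.
  exists [ffun=> true], (pure_vstrat R v_exact), 0.
  by split; [rewrite inE | split; [left | exact: valid_eps_exact]].
split.
  exists [ffun=> true], (pure_vstrat R v_signed).
  split; first by rewrite inE.
  split; first by right; left.
  by split; [exists 0, 0; exact: valid_eps_signed | exact: not_vl_stackelberg_signed].
exists [ffun=> true], (pure_vstrat R v_lax).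
by split; [exact: vl_stackelberg_lax | exact: not_valid_lax].
Qed.
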